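(* Let $L \ge N$, let $\mathbf{T} \in \mathbb{R}^{L\times N}$ have full rank $N$, and let $\gamma>0$. Define $H:\mathbb{R}^N\rightrightarrows\mathbb{R}^N$ by $\mathbf{y}\in H(\mathbf{x})$ if and only if $\mathbf{x} = \mathbf{T}^{\dagger}S_\gamma\mathbf{T}(\mathbf{x}+\mathbf{y})$. Then for $\mathbf{y}\in\mathbb{R}^N$ we have $\mathbf{y}\in H(\mathbf{0})$ if and only if $\|\mathbf{T}\mathbf{y}\|_\infty \le \gamma$, where $\|\mathbf{T}\mathbf{y}\|_\infty = \max_{1\le j\le L}|[\mathbf{T}\mathbf{y}]_j|$.
   Context: $\mathbf{T}^*$ is the transpose, $\mathbf{T}^{\dagger}=(\mathbf{T}^*\mathbf{T})^{-1}\mathbf{T}^*$ the Moore–Penrose inverse. $S_\gamma:\mathbb{R}^L\to\mathbb{R}^L$ is componentwise soft shrinkage: $[S_\gamma(\mathbf{y})]_j = y_j-\gamma$ if $y_j\ge\gamma$, $y_j+\gamma$ if $y_j\le-\gamma$, $0$ if $|y_j|<\gamma$. *)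

From HB Require Import structures.
From mathcomp Require Import all_boot all_order all_algebra.
From mathcomp Require Import reals.
Set Implicit Arguments. Unset Strict Implicit. Unset Printing Implicit Defensive.
Import Order.TTheory GRing.Theory Num.Theory.
Local Open Scope ring_scope.

(* Moore–Penrose inverse for a full-column-rank T: (T^* T)^{-1} T^* *)
Definition pinv (R : realType) (L N : nat) (T : 'M[R]_(L, N)) : 'M[R]_(N, L) :=
  invmx (T^T *m T) *m T^T.

Definition soft_shrink (R : realType) (L : nat) (gamma : R) (y : 'cV[R]_L) : 'cV[R]_L :=
  \col_j (if gamma <= y j 0 then y j 0 - gamma
          else if y j 0 <= - gamma then y j 0 + gamma else 0).

Definition Hop (R : realType) (L N : nat) (T : 'M[R]_(L, N)) (gamma : R)
  (x y : 'cV[R]_N) : Prop :=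
  x = pinv T *m soft_shrink gamma (T *m (x + y)).

Definition norm_inf (R : realType) (L : nat) (v : 'cV[R]_L) : R :=
  \big[Num.max/0]_(j < L) `|v j 0|.

From HB Require Import structures.
From mathcomp Require Import all_boot all_order all_algebra.
From mathcomp Require Import reals lra.
Set Implicit Arguments. Unset Strict Implicit. Unset Printing Implicit Defensive.
Import Order.TTheory GRing.Theory Num.Theory.
Local Open Scope ring_scope.

(* Since T^T T is invertible, y \in H(0) says T^T S_gamma(Ty) = 0, hence
   <Ty, S_gamma(Ty)> = <y, T^T S_gamma(Ty)> = 0.  Every summand v_j S_gamma(v_j)
   of this inner product is nonnegative, and it vanishes exactly when
   |v_j| <= gamma; so all |[Ty]_j| <= gamma.  Conversely, if |Ty|_oo <= gamma
   then S_gamma(Ty) = 0 and y \in H(0) trivially. *)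

Definition shrink (R : realDomainType) (gamma v : R) : R :=
  if gamma <= v then v - gamma else if v <= - gamma then v + gamma else 0.

Lemma shrink_eq0 (R : realDomainType) (gamma v : R) : 0 <= gamma ->
  (shrink gamma v == 0) = (`|v| <= gamma).
Proof.
rewrite /shrink ler_norml => gamma_ge0.
by case: (lerP gamma v) => ?; [|case: (lerP v (- gamma)) => ?];
  apply/eqP/andP => [? | [? ?]]; try split; lra.
Qed.

Lemma mul_shrink_ge0 (R : realDomainType) (gamma v : R) : 0 <= gamma ->
  0 <= v * shrink gamma v.
Proof.
rewrite /shrink => gamma_ge0.
by case: (lerP gamma v) => ?; [|case: (lerP v (- gamma)) => ?]; nra.
Qed.

Lemma mul_shrink_eq0 (R : realDomainType) (gamma v : R) : 0 <= gamma ->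
  (v * shrink gamma v == 0) = (`|v| <= gamma).
Proof.
move=> gamma_ge0; rewrite mulf_eq0 shrink_eq0 //; case: eqP => // ->.
by rewrite normr0 gamma_ge0.
Qed.

Lemma soft_shrink_mxE (R : realType) (L : nat) (gamma : R) (v : 'cV[R]_L) j k :
  soft_shrink gamma v j k = shrink gamma (v j 0).
Proof. by rewrite mxE. Qed.

Lemma norm_inf_leP (R : realType) (L : nat) (v : 'cV[R]_L) (c : R) : 0 <= c ->
  reflect (forall j, `|v j 0| <= c) (norm_inf v <= c).
Proof.
move=> c_ge0; apply: (iffP (bigmax_leP _ _ _ _)) => [[_ le_c] j | le_c].
  exact: le_c.
by split=> // j _; exact: le_c.
Qed.

Lemma soft_shrink_eq0 (R : realType) (L : nat) (gamma : R) (v : 'cV[R]_L) :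
  0 <= gamma -> (soft_shrink gamma v == 0) = (norm_inf v <= gamma).
Proof.
move=> gamma_ge0; apply/eqP/(norm_inf_leP _ gamma_ge0) => [S0 j | le_gamma].
  by rewrite -(shrink_eq0 _ gamma_ge0) -(soft_shrink_mxE _ _ j 0) S0 mxE.
apply/matrixP => j k; rewrite soft_shrink_mxE mxE.
by apply/eqP; rewrite shrink_eq0.
Qed.

Lemma trmx_mul_soft_shrink_eq0 (R : realType) (L : nat) (gamma : R) (v : 'cV[R]_L) :
  0 <= gamma -> (v^T *m soft_shrink gamma v == 0) = (norm_inf v <= gamma).
Proof.
move=> gamma_ge0; apply/eqP/idP => [inner0 | ]; last first.
  by rewrite -soft_shrink_eq0 // => /eqP ->; rewrite mulmx0.
have {}inner0 : \sum_j v j 0 * shrink gamma (v j 0) = 0.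
  have := congr1 (fun M : 'M_1 => M 0 0) inner0; rewrite !mxE => sum0.
  by rewrite -[RHS]sum0; apply: eq_bigr => j _; rewrite !mxE.
apply/(norm_inf_leP _ gamma_ge0) => j.
rewrite -(mul_shrink_eq0 _ gamma_ge0); apply/eqP.
by apply: (psumr_eq0P _ inner0) => // i _; exact: mul_shrink_ge0.
Qed.

Lemma mulmx_trmx_self_eq0 (R : realDomainType) (L : nat) (w : 'rV[R]_L) :
  w *m w^T = 0 -> w = 0.
Proof.
move/matrixP => /(_ 0 0); rewrite !mxE => sq0.
have {}sq0 : \sum_j w 0 j ^+ 2 = 0.
  by rewrite -[RHS]sq0; apply: eq_bigr => j _; rewrite mxE.
apply/rowP => j; rewrite mxE; apply/eqP; rewrite -sqrf_eq0; apply/eqP.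
by apply: (psumr_eq0P _ sq0) => // i _; exact: sqr_ge0.
Qed.

Lemma gram_unitmx (R : realFieldType) (L N : nat) (T : 'M[R]_(L, N)) :
  \rank T = N -> T^T *m T \in unitmx.
Proof.
move=> rankT; rewrite -row_free_unit -kermx_eq0; apply/eqP/row_matrixP => i.
rewrite row0; set u := row i _.
have uG0 : u *m (T^T *m T) = 0 by rewrite /u -row_mul mulmx_ker row0.
have : (u *m T^T) *m (u *m T^T)^T = 0.
  by rewrite trmx_mul trmxK mulmxA -(mulmxA u) uG0 mul0mx.
have freeTt : row_free T^T by rewrite /row_free mxrank_tr rankT.
by move/mulmx_trmx_self_eq0/eqP; rewrite mulmx_free_eq0 // => /eqP.
Qed.

Lemma pinv_mulmx_eq0 (R : realType) (L N : nat) (T : 'M[R]_(L, N)) (s : 'cV[R]_L) :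
  \rank T = N -> (pinv T *m s == 0) = (T^T *m s == 0).
Proof.
move=> /gram_unitmx G_unit; rewrite /pinv -mulmxA.
apply/eqP/eqP => [Ps0 | ->]; last by rewrite mulmx0.
by rewrite -(mulKVmx G_unit (T^T *m s)) Ps0 mulmx0.
Qed.

Theorem theorem2p6 (R : realType) (L N : nat) (T : 'M[R]_(L, N)) (gamma : R)
  (hLN : (N <= L)%N) (hrank : \rank T = N) (hgamma : 0 < gamma)
  (y : 'cV[R]_N) :
  Hop T gamma 0 y <-> norm_inf (T *m y) <= gamma.
Proof.
have gamma_ge0 := ltW hgamma.
rewrite /Hop add0r; split => [/esym/eqP | le_gamma].
  rewrite pinv_mulmx_eq0 // => /eqP TtS0.
  by rewrite -trmx_mul_soft_shrink_eq0 // trmx_mul -mulmxA TtS0 mulmx0.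
by move: le_gamma; rewrite -soft_shrink_eq0 // => /eqP ->; rewrite mulmx0.
Qed.
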